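(* Let $G$ be a finite simple graph, let $V_1\subset V(G)$ and $V_2 = V(G)\setminus V_1$ with both $V_1,V_2$ nonempty, and let $G_1=G(V_1)$. Write $V=V(G)$. Assume that $\max_{x,y\in V}\delta(x,y)\le 2$ (the contracted diameter of $V$ is at most $2$). Let $[S,\bar S]$ be an edge cut of $G$ with $V_2\subset S$, and let $k = \min_{x\in V_1}\deg_G(x)$. Assume $k > |[S,\bar S]|$. Then: 1. there exists $\bar s\in\bar S$ with $\delta(\bar s,S)=2$; 2. for every $s\in S$, $\delta(s,\bar S)=1$; 3. $|S\cap V_1| < |[S,\bar S]| < k < |\bar S|$; 4. $S\cap V_1\subset \partial^2 V_1$ and $\bar S\supset i^2 V_1$; 5. $\Phi\le |[S,\bar S]|$.
   Context: For $A,B\subset V(G)$, $[A,B]$ denotes the set of edges $ab$ of $G$ with $a\in A$, $b\in B$ (edges are unoriented, so $[A,B]=[B,A]$); $[v,A]$ means $[\{v\},A]$. $\deg_G(v)=|[v,V(G)]|$. For $A\subset V(G)$, $G(A)$ is the induced subgraph on $A$. $d_G(v,w)$ is the graph distance in $G$ and $d_G(v,A)=\min_{w\in A}d_G(v,w)$. An edge cut is a set $[S,\bar S]$ where $\emptyset\ne S\subsetneq V(G)$ and $\bar S=V(G)\setminus S$. Contracted distance: for $x,y\in V_1$, $\delta(x,y)=\min\{d_{G_1}(x,y),\, d_G(x,V_2)+d_G(y,V_2)\}$; for $x\in V$ and $y\in V_2$, $\delta(x,y)=\delta(y,x)=d_G(x,V_2)$. For $x\in V$ and $A\subset V$, $\delta(x,A)=\min_{a\in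 A}\delta(x,a)$. For $j\ge 1$: $\partial^j V_1=\{x\in V_1: |[x,V_2]|\ge j\}$ and $i^j V_1=\{x\in V_1: |[x,V_2]|<j\}$. $\Phi=\sum_{x\in V_1}\min\{\max\{1,|[x,i^2V_1]|\},\,|[x,V_2]|\}$. *)

(* A finite simple graph is a symmetric irreflexive relation
   e : rel T on a finite type T; V(G) = [set: T]. *)
From mathcomp Require Import all_boot.
Set Implicit Arguments. Unset Strict Implicit. Unset Printing Implicit Defensive.

Section Graph.
Variables (T : finType) (e : rel T).

(* reach A n x y : there is a walk of length exactly n from x to y
   all of whose vertices lie in A (i.e. a walk in the induced subgraph G(A)). *)
Fixpoint reach (A : {set T}) (n : nat) (x y : T) : bool :=
  match n with
  | 0 => (x \in A) && (x == y)
  | n'.+1 => [exists z, [&& reach A n' x z, e z y & y \in A]]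
  end.

(* Extended naturals: None = +infinity. *)
Definition omin (a b : option nat) : option nat :=
  match a, b with
  | None, _ => b
  | _, None => a
  | Some m, Some n => Some (minn m n)
  end.

Definition oadd (a b : option nat) : option nat :=
  match a, b with
  | Some m, Some n => Some (m + n)
  | _, _ => None
  end.

(* Graph distance in G(A); None if no path.  A shortest walk has fewer than
   #|T| edges, so searching lengths 0 .. #|T|-1 suffices. *)
Definition dist (A : {set T}) (x y : T) : option nat :=
  let n := find (fun n => reach A n x y) (iota 0 #|T|) in
  if n < #|T| then Some n else None.

Definition dG (x y : T) : option nat := dist setT x y.
Definition dGset (x : T) (B : {set T}) : option nat :=
  \big[omin/None]_(b in B) dG x b.

(* [A,B] as a set of oriented pairs (a,b) with a in A, b in B; for disjoint
   A, B each unoriented edge is counted exactly once. *)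
Definition edges_between (A B : {set T}) : {set T * T} :=
  [set p : T * T | [&& e p.1 p.2, p.1 \in A & p.2 \in B]].

Definition nbrs_in (v : T) (A : {set T}) : nat := #|[set y in A | e v y]|.

Definition deg (v : T) : nat := nbrs_in v setT.

Variable V1 : {set T}.
Definition V2 : {set T} := ~: V1.

Definition delta (x y : T) : option nat :=
  if y \in V2 then dGset x V2
  else if x \in V2 then dGset y V2
  else omin (dist V1 x y) (oadd (dGset x V2) (dGset y V2)).

Definition delta_set (x : T) (A : {set T}) : option nat :=
  \big[omin/None]_(a in A) delta x a.

Definition boundary (j : nat) : {set T} := [set x in V1 | j <= nbrs_in x V2].
Definition interior (j : nat) : {set T} := [set x in V1 | nbrs_in x V2 < j].

Definition Phi : nat :=
  \sum_(x in V1) minn (maxn 1 (nbrs_in x (interior 2))) (nbrs_in x V2).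

End Graph.

(* Write W = V2 = ~: V1 and m = |[S, ~: S]| < k, the minimum degree on V1;
   since W is contained in S, the vertices of ~: S all lie in V1.
   1. Counting edges of the cut from the ~: S side shows that some vertex sb
      of ~: S has no neighbour in S (otherwise m >= k); all the other claims
      are derived from such an sb.
   2. Then k <= deg sb < |~: S|, and sb is at contracted distance >= 2, hence
      exactly 2, from S and from W.  A shortest path from sb to W yields an
      edge between W and ~: S, and the diameter bound forces every vertex of
      S :&: V1 to have a neighbour in ~: S.  This gives claims 1 and 2.
   3. Splitting the cut as the edges leaving S :&: V1 plus those leaving W
      (at least one) gives |S :&: V1| < m; comparing the degree of a vertex
      of S :&: V1 with m shows it has two neighbours in W (claim 4), and the
      same splitting bounds Phi by m (claim 5). *)
From HB Require Import structures.
From mathcomp Require Import all_boot zify.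
Set Implicit Arguments. Unset Strict Implicit. Unset Printing Implicit Defensive.

Lemma ominA : associative omin.
Proof. by case=> [a|] [b|] [c|] //=; rewrite minnA. Qed.
Lemma ominC : commutative omin.
Proof. by case=> [a|] [b|] //=; rewrite minnC. Qed.
Lemma omin0 : left_id None omin.
Proof. by case. Qed.
HB.instance Definition _ := Monoid.isComLaw.Build (option nat) None omin ominA ominC omin0.

Lemma omin_sel a b : omin a b = a \/ omin a b = b.
Proof. by case: a b => [a|] [b|] /=; auto; rewrite /minn; case: ifP; auto. Qed.

Lemma omin_Some_le m b n : omin (Some m) b = Some n -> n <= m.
Proof. by case: b => [b|] /= [<-] //; rewrite geq_minl. Qed.

Section BigOmin.
Variables (I : finType) (A : {set I}) (F : I -> option nat).
Local Notation M := (\big[omin/None]_(a in A) F a).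

Lemma big_omin_witness n : M = Some n -> exists2 a, a \in A & F a = Some n.
Proof.
pose P x := x = None \/ exists2 a, a \in A & F a = x.
have : P M.
  apply: big_ind; [by left | | by move=> a aA; right; exists a].
  by move=> x y Px Py; case: (omin_sel x y) => ->.
by case=> [-> | [a aA <-]] // Fa; exists a.
Qed.

Lemma big_omin_le n a m : M = Some n -> a \in A -> F a = Some m -> n <= m.
Proof. by move=> hM aA Fa; move: hM; rewrite (bigD1 a) //= Fa => /omin_Some_le. Qed.

Lemma big_omin_eq n :
  (exists2 a, a \in A & F a = Some n) ->
  (forall a m, a \in A -> F a = Some m -> n <= m) -> M = Some n.
Proof.
move=> [a aA Fa] lb; case hM: M => [n'|]; last first.
  by move: hM; rewrite (bigD1 a) //= Fa; case: (\big[omin/None]_(i in A | i != a) F i).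
have [b bA Fb] := big_omin_witness hM.
suff -> : n' = n by [].
by apply/eqP; rewrite eqn_leq (big_omin_le hM aA Fa) (lb b n' bA Fb).
Qed.
End BigOmin.

Section Distances.
Variables (T : finType) (e : rel T).
Hypothesis e_irr : irreflexive e.

Lemma dist_reach (A : {set T}) x y n : dist e A x y = Some n -> reach e A n x y.
Proof.
rewrite /dist; case: ifP => // n_lt [<-].
have : has (fun n => reach e A n x y) (iota 0 #|T|) by rewrite has_find size_iota.
by move/(nth_find 0); rewrite nth_iota.
Qed.

Lemma dist_adj (A : {set T}) x y : x \in A -> y \in A -> e x y ->
  exists2 n, dist e A x y = Some n & n <= 1.
Proof.
move=> xA yA exy.
have walk1 : reach e A 1 x y by apply/existsP; exists x; rewrite /= xA eqxx exy yA.
have T_gt1 : 1 < #|T|.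
  by apply/card_gt1P; exists x, y; split=> //; apply: contraTneq exy => ->; rewrite e_irr.
have first_le : find (fun n => reach e A n x y) (iota 0 #|T|) <= 1.
  by rewrite leqNgt; apply/negP => /(before_find 0); rewrite nth_iota // add0n walk1.
by rewrite /dist (leq_ltn_trans first_le T_gt1); eexists.
Qed.

Lemma reach0 (A : {set T}) x y : reach e A 0 x y -> x = y.
Proof. by case/andP => _ /eqP. Qed.

Lemma reach1 (A : {set T}) x y : reach e A 1 x y -> e x y.
Proof. by case/existsP => z /and3P [/andP [_ /eqP <-] exy _]. Qed.

Lemma reach2 (A : {set T}) x y : reach e A 2 x y -> exists2 z, e x z & e z y.
Proof. by case/existsP => z /and3P [/reach1 exz ezy _]; exists z. Qed.

Lemma dGset0 x (B : {set T}) : dGset e x B = Some 0 -> x \in B.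
Proof. by case/big_omin_witness => b bB /dist_reach /reach0 ->. Qed.

Lemma dGset_adj x (B : {set T}) w n : w \in B -> e x w -> dGset e x B = Some n -> n <= 1.
Proof.
move=> wB exw hB; have [m hm m1] := dist_adj (in_setT x) (in_setT w) exw.
exact: leq_trans (big_omin_le hB wB hm) m1.
Qed.
End Distances.

Section ContractedDistance.
Variables (T : finType) (e : rel T) (V1 : {set T}).
Hypothesis e_irr : irreflexive e.
Local Notation W := (V2 V1).
Local Notation delta := (delta e V1).

Lemma inW x : (x \in W) = (x \notin V1).
Proof. by rewrite inE. Qed.

Lemma delta0 x y : delta x y = Some 0 -> x = y \/ x \in W /\ y \in W.
Proof.
rewrite /delta; case: ifP => [yW /dGset0 | yW]; first by right.
case: ifP => [xW /dGset0 | xW]; first by rewrite yW.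
case: (omin_sel (dist e V1 x y) (oadd (dGset e x W) (dGset e y W))) => ->.
  by move/dist_reach/reach0; left.
case: (dGset e x W) (@dGset0 _ e x W) => [[|a]|] // x0; first by rewrite x0 in xW.
by case: (dGset e y W).
Qed.

Lemma delta_le1 x y n : x \in V1 -> delta x y = Some n -> n <= 1 ->
  x = y \/ exists2 w, e x w & w = y \/ w \in W /\ y \in W.
Proof.
move=> xV1; rewrite /delta; case: ifP => yW.
  case/big_omin_witness => w wW /dist_reach; case: n => [|[|n]] // walk _.
    by move: wW; rewrite -(reach0 walk) inW xV1.
  by right; exists w; [exact: reach1 walk | right].
rewrite inW xV1 /=.
case: (omin_sel (dist e V1 x y) (oadd (dGset e x W) (dGset e y W))) => ->.
  move/dist_reach; case: n => [|[|n]] // walk _; first by left; exact: reach0 walk.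
  by right; exists y; [exact: reach1 walk | left].
case: (dGset e x W) (@dGset0 _ e x W) => [[|a]|] // x0.
  by move: (x0 erefl); rewrite inW xV1.
case: (dGset e y W) (@dGset0 _ e y W) => [[|b]|] // y0; first by rewrite y0 in yW.
by move=> [<-]; rewrite addSn addnS.
Qed.

Lemma delta_V1_adj x y n : x \in V1 -> y \in V1 -> e x y -> delta x y = Some n -> n <= 1.
Proof.
move=> xV1 yV1 exy; rewrite /delta !inW xV1 yV1 /=.
have [d -> d1] := dist_adj e_irr xV1 yV1 exy.
by move/omin_Some_le/leq_trans; apply.
Qed.

Lemma delta_W_adj x y w n : x \in W -> y \in V1 -> w \in W -> e y w ->
  delta x y = Some n -> n <= 1.
Proof.
move=> xW yV1 wW eyw; rewrite /delta inW yV1 /= xW.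
exact/(dGset_adj e_irr wW eyw).
Qed.

Lemma delta_two x y : x \in V1 -> y \in V1 -> dGset e y W = Some 2 ->
  delta x y = Some 2 -> exists2 z, e x z & e z y.
Proof.
move=> xV1 yV1 yW2; rewrite /delta !inW xV1 yV1 /= yW2.
case: (omin_sel (dist e V1 x y) (oadd (dGset e x W) (Some 2))) => ->.
  by move/dist_reach/reach2.
case: (dGset e x W) (@dGset0 _ e x W) => [[|a]|] // x0.
  by move: (x0 erefl); rewrite inW xV1.
by case; lia.
Qed.
End ContractedDistance.

Lemma sum_pos_ge (I : finType) (A : {set I}) (F : I -> nat) s :
  s \in A -> (forall t, t \in A -> 0 < F t) -> F s + #|A| <= \sum_(t in A) F t + 1.
Proof.
move=> sA pos; rewrite -sum1_card (bigD1 s) //= (bigD1 s sA) /=.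
rewrite add1n addnS addn1 ltnS leq_add2l.
by apply: leq_sum => t /andP [tA _]; apply: pos.
Qed.

Lemma sum_ge_term (I : finType) (A : {set I}) (F : I -> nat) s :
  s \in A -> F s <= \sum_(t in A) F t.
Proof. by move=> sA; rewrite (bigD1 s) //= leq_addr. Qed.

(* For 1 <= t <= k we have k <= t * (k + 1 - t), since (t - 1) * (k - t) >= 0. *)
Lemma le_mul_complement t k : 0 < t -> t <= k -> k <= t * (k.+1 - t).
Proof.
move=> t_gt0 /subnKC <-; set d := k - t.
by rewrite -addnS addKn mulnS leq_add2l leq_pmull.
Qed.

Section Counting.
Variables (T : finType) (e : rel T).
Hypotheses (e_sym : symmetric e) (e_irr : irreflexive e).
Local Notation nbrs := (nbrs_in e).

Lemma nbrsE v (A : {set T}) : nbrs v A = \sum_(y in A) (e v y : nat).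
Proof.
rewrite /nbrs_in -sum1_card big_mkcond [RHS]big_mkcond; apply: eq_bigr => y _.
by rewrite inE; case: (y \in A); case: (e v y).
Qed.

Lemma card_edges_between (A B : {set T}) :
  #|edges_between e A B| = \sum_(a in A) nbrs a B.
Proof.
under [RHS]eq_bigr do rewrite nbrsE.
rewrite pair_big /= -sum1_card big_mkcond [RHS]big_mkcond /=.
apply: eq_bigr => -[a b] _; rewrite inE /=.
by case: (e a b); case: (a \in A); case: (b \in B).
Qed.

Lemma card_edges_betweenC (A B : {set T}) :
  #|edges_between e A B| = \sum_(b in B) nbrs b A.
Proof.
rewrite card_edges_between; under eq_bigr do rewrite nbrsE.
under [RHS]eq_bigr do rewrite nbrsE.
by rewrite exchange_big; apply: eq_bigr => b _; apply: eq_bigr => a _; rewrite e_sym.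
Qed.

Lemma deg_split v (A : {set T}) : deg e v = nbrs v A + nbrs v (~: A).
Proof.
rewrite /deg !nbrsE (bigID (mem A)) /=.
by congr (_ + _); apply: eq_bigl => y; rewrite !inE.
Qed.

(* Loops are excluded, so a vertex of A has fewer than #|A| neighbours in A. *)
Lemma nbrs_lt_card v (A : {set T}) : v \in A -> nbrs v A < #|A|.
Proof.
move=> vA; rewrite (cardsD1 v A) vA add1n ltnS; apply: subset_leq_card.
apply/subsetP => y; rewrite !inE => /andP [yA evy]; rewrite yA andbT.
by apply: contraTneq evy => ->; rewrite e_irr.
Qed.

Lemma nbrs_sub v (A B : {set T}) : A \subset B -> nbrs v A <= nbrs v B.
Proof.
move=> /subsetP AB; apply: subset_leq_card; apply/subsetP => y; rewrite !inE.
by case/andP => /AB -> ->.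
Qed.

Lemma nbrs_gt0 v (A : {set T}) a : a \in A -> e v a -> 0 < nbrs v A.
Proof. by move=> aA eva; apply/card_gt0P; exists a; rewrite inE aA eva. Qed.

Lemma nbrs_eq0 v (A : {set T}) : (forall a, e v a -> a \notin A) -> nbrs v A = 0.
Proof.
move=> h; apply/eqP; rewrite cards_eq0; apply/eqP/setP => y; rewrite !inE.
by apply/negbTE; rewrite negb_and; case: (e v y) (h y) => [->|] //; rewrite orbT.
Qed.

Lemma sum_splitV2 (S V : {set T}) (F : T -> nat) : V2 V \subset S ->
  \sum_(t in S) F t = \sum_(t in S :&: V) F t + \sum_(t in V2 V) F t.
Proof.
move=> /subsetP sub; rewrite (bigID (mem V)) /=; congr (_ + _); apply: eq_bigl => y.
  by rewrite !inE.
rewrite !inE; case yV: (y \in V); rewrite ?andbF //= andbT.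
by apply: sub; rewrite inE yV.
Qed.

(* If every vertex of a nonempty set B has degree at least k and at least one
   neighbour outside B, then the cut [~: B, B] has at least k edges: a vertex
   of B has at most #|B| - 1 neighbours inside B, hence at least
   max 1 (k + 1 - #|B|) outside, and #|B| * max 1 (k + 1 - #|B|) >= k. *)
Lemma cut_ge_min_degree (B : {set T}) k : B != set0 ->
  (forall x, x \in B -> k <= deg e x) -> (forall x, x \in B -> 0 < nbrs x (~: B)) ->
  k <= #|edges_between e (~: B) B|.
Proof.
move=> B_ne deg_ge out_gt0; rewrite card_edges_betweenC.
have [B_ge_k | B_lt_k] := leqP k #|B|.
  apply: leq_trans B_ge_k _; rewrite -sum1_card; exact: leq_sum.
have B_gt0 : 0 < #|B| by rewrite card_gt0.
apply: leq_trans (le_mul_complement B_gt0 (ltnW B_lt_k)) _.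
rewrite -sum_nat_const; apply: leq_sum => x xB.
have := deg_ge x xB; rewrite (deg_split x B).
have := nbrs_lt_card xB; lia.
Qed.
End Counting.

Section SmallCut.
Variables (T : finType) (e : rel T).
Hypotheses (e_sym : symmetric e) (e_irr : irreflexive e).
Variable V1 : {set T}.
Hypothesis V2_ne : V2 V1 != set0.
Hypothesis diam : forall x y : T, exists2 n, delta e V1 x y = Some n & n <= 2.
Variable S : {set T}.
Hypotheses (S_ne : S != set0) (S_proper : S != setT) (V2_sub : V2 V1 \subset S).
Variable k : nat.
Hypothesis k_min : forall x, x \in V1 -> k <= deg e x.
Hypothesis k_gt : #|edges_between e S (~: S)| < k.

Local Notation W := (V2 V1).
Local Notation delta := (delta e V1).
Local Notation nbrs := (nbrs_in e).
Local Notation cut := #|edges_between e S (~: S)|.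

Lemma coS_V1 x : x \in ~: S -> x \in V1.
Proof. by apply: contraTT => /negbTE xV1; rewrite inE negbK (subsetP V2_sub) // inE xV1. Qed.

Lemma cut_split : cut = \sum_(t in S :&: V1) nbrs t (~: S) + \sum_(t in W) nbrs t (~: S).
Proof. by rewrite card_edges_between (sum_splitV2 _ V2_sub). Qed.

(* Since the cut is smaller than the minimum degree, some vertex of ~: S has
   no neighbour in S. *)
Lemma exists_far_from_S : exists2 sb, sb \in ~: S & forall z, e sb z -> z \in ~: S.
Proof.
have [sb /andP [sbS /forallP sb_far] | none] :=
  pickP [pred x | (x \in ~: S) && [forall z, e x z ==> (z \in ~: S)]].
  by exists sb => // z; apply/implyP.
suff : k <= cut by rewrite leqNgt k_gt.
have coS_ne : ~: S != set0.
  by apply: contraNneq S_proper => coS0; rewrite -[S]setCK coS0 setC0.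
rewrite -[X in edges_between e X]setCK.
apply: cut_ge_min_degree => // [x /coS_V1 | x xS]; first exact: k_min.
have := none x; rewrite /= xS /= => /negbT/forallPn [z].
rewrite negb_imply => /andP [exz zS].
by apply: nbrs_gt0 exz; rewrite setCK; move: zS; rewrite inE negbK.
Qed.

Section FarVertex.
Variable sb : T.
Hypotheses (sb_out : sb \in ~: S) (sb_far : forall z, e sb z -> z \in ~: S).

Let sb_V1 : sb \in V1 := coS_V1 sb_out.

(* All neighbours of sb lie in ~: S, which is therefore larger than k. *)
Lemma k_lt_coS : k < #|~: S|.
Proof.
have := k_min sb_V1; rewrite (deg_split e sb S) nbrs_eq0; last first.
  by move=> a /sb_far; rewrite inE.
by rewrite add0n => /leq_ltn_trans; apply; apply: nbrs_lt_card.
Qed.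

Lemma delta_far a n : a \in S -> delta sb a = Some n -> 2 <= n.
Proof.
move=> aS hn; rewrite leqNgt; apply/negP => n_le1.
have [sba | [w /sb_far wS [wa | [wW _]]]] := delta_le1 sb_V1 hn n_le1.
- by move: sb_out; rewrite inE sba aS.
- by move: wS; rewrite inE wa aS.
- by move: wS; rewrite inE (subsetP V2_sub w wW).
Qed.

(* Claim 1: by the diameter bound, sb is at contracted distance 2 from S. *)
Lemma delta_set_far : delta_set e V1 sb S = Some 2.
Proof.
apply: big_omin_eq => [|a n aS hn]; last exact: delta_far aS hn.
have [s0 s0S] := set0Pn _ S_ne; have [n hn n_le2] := diam sb s0.
suff n2 : n = 2 by exists s0; rewrite // hn n2.
by apply/eqP; rewrite eqn_leq n_le2 (delta_far s0S hn).
Qed.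

Lemma dist_far_V2 : dGset e sb W = Some 2.
Proof.
have [v vW] := set0Pn _ V2_ne; have [n hn n_le2] := diam sb v.
have n2 : n = 2 by apply/eqP; rewrite eqn_leq n_le2 (delta_far (subsetP V2_sub v vW) hn).
by move: hn; rewrite /delta vW n2.
Qed.

(* A shortest path from sb to V2 provides an edge between V2 and ~: S. *)
Lemma V2_coS_edge : exists2 w, w \in W & exists2 z, z \in ~: S & e z w.
Proof.
have [w wW /dist_reach/reach2 [z /sb_far zS ezw]] := big_omin_witness dist_far_V2.
by exists w => //; exists z.
Qed.

Lemma S_V1_nbr s : s \in S -> s \in V1 -> exists2 a, a \in ~: S & e s a.
Proof.
move=> sS sV1; have [n hn n_le2] := diam s sb.
have [n_le1 | n_gt1] := leqP n 1.
  have [ssb | [w esw [wsb | [_ sbW]]]] := delta_le1 sV1 hn n_le1.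
  - by move: sb_out; rewrite inE -ssb sS.
  - by exists w => //; rewrite wsb.
  - by move: sbW; rewrite inW sb_V1.
have n2 : n = 2 by apply/eqP; rewrite eqn_leq n_le2 n_gt1.
have [z esz ezsb] := delta_two sV1 sb_V1 dist_far_V2 (etrans hn (congr1 Some n2)).
by exists z => //; apply: sb_far; rewrite e_sym.
Qed.

Lemma S_V1_nbr_gt0 t : t \in S :&: V1 -> 0 < nbrs t (~: S).
Proof. by case/setIP => tS tV1; have [a aS eta] := S_V1_nbr tS tV1; apply: nbrs_gt0 eta. Qed.

(* Claim 2: every vertex of S is at contracted distance exactly 1 from ~: S,
   via an edge for vertices of V1 and via the edge between V2 and ~: S for
   vertices of V2. *)
Lemma delta_set_S s : s \in S -> delta_set e V1 s (~: S) = Some 1.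
Proof.
move=> sS.
have delta_pos a n : a \in ~: S -> delta s a = Some n -> 0 < n.
  move=> aS; case: n => // /delta0 [sa | [_ aW]]; first by move: aS; rewrite inE -sa sS.
  by move: aS; rewrite inE (subsetP V2_sub a aW).
suff [a aS near] : exists2 a, a \in ~: S & forall n, delta s a = Some n -> n <= 1.
  apply: big_omin_eq => [|b m]; last exact: delta_pos.
  have [n hn _] := diam s a.
  suff n1 : n = 1 by exists a; rewrite // hn n1.
  by apply/eqP; rewrite eqn_leq near // (delta_pos a n aS hn).
have [sV1 | sW] := boolP (s \in V1).
  have [a aS esa] := S_V1_nbr sS sV1.
  by exists a => // n /(delta_V1_adj e_irr sV1 (coS_V1 aS) esa).
have [w wW [z zS ezw]] := V2_coS_edge.
have sW' : s \in W by rewrite inW.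
by exists z => // n /(delta_W_adj e_irr sW' (coS_V1 zS) wW ezw).
Qed.

Lemma V2_part_pos : 0 < \sum_(t in W) nbrs t (~: S).
Proof.
have [w wW [z zS ezw]] := V2_coS_edge.
by apply: leq_trans (sum_ge_term _ wW); apply: (nbrs_gt0 zS); rewrite e_sym.
Qed.

(* Claim 3 (first inequality): each vertex of S :&: V1, and in addition some
   vertex of V2, sends an edge across the cut. *)
Lemma card_S_V1_lt_cut : #|S :&: V1| < cut.
Proof.
rewrite cut_split -addn1 leq_add ?V2_part_pos //.
by rewrite -sum1_card; apply: leq_sum => t /S_V1_nbr_gt0.
Qed.

(* Claim 4: a vertex s of S :&: V1 has at most #|S :&: V1| - 1 neighbours in
   S :&: V1 and at most cut - #|S :&: V1| in ~: S; as its degree exceeds the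
   cut, at least two of its neighbours lie in V2. *)
Lemma S_V1_boundary : S :&: V1 \subset boundary e V1 2.
Proof.
apply/subsetP => s sA; have /setIP [sS sV1] := sA; rewrite inE sV1 /=.
have deg_s := k_min sV1; rewrite (deg_split e s S) in deg_s.
have split_S : nbrs s S = nbrs s (S :&: V1) + nbrs s W.
  by rewrite !nbrsE (sum_splitV2 _ V2_sub).
have inside := nbrs_lt_card e_irr sA.
have across := sum_pos_ge sA S_V1_nbr_gt0.
move: deg_s split_S inside across k_gt cut_split V2_part_pos; clear; lia.
Qed.

Lemma interior_coS : interior e V1 2 \subset ~: S.
Proof.
apply/subsetP => x; rewrite inE => /andP [xV1 few]; rewrite inE.
apply: contraTN few => xS; rewrite -leqNgt.
by have := subsetP S_V1_boundary x; rewrite !inE xS xV1 => /(_ isT) /andP [].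
Qed.

(* Claim 5: on S :&: V1 the summand of Phi is at most the number of edges
   into ~: S (which contains the interior vertices), and on ~: S it is at most
   the number of edges into V2; together these count the cut. *)
Lemma Phi_le_cut : Phi e V1 <= cut.
Proof.
rewrite /Phi (bigID (mem S)) /= cut_split leq_add //.
  rewrite (eq_bigl (mem (S :&: V1))) => [|x]; last by rewrite !inE andbC.
  apply: leq_sum => x xA; apply: leq_trans (geq_minl _ _) _.
  by rewrite geq_max S_V1_nbr_gt0 // nbrs_sub // interior_coS.
rewrite (eq_bigl (mem (~: S))) => [|x]; last first.
  by rewrite !inE; case xS: (x \in S); rewrite ?andbF //= andbT coS_V1 // inE xS.
rewrite -card_edges_between (card_edges_betweenC e_sym).
by apply: leq_sum => x _; apply: geq_minr.
Qed.
End FarVertex.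
End SmallCut.

Theorem theorem1 (T : finType) (e : rel T)
  (e_sym : symmetric e) (e_irr : irreflexive e)
  (V1 : {set T}) (V1_ne : V1 != set0) (V2_ne : V2 V1 != set0)
  (diam : forall x y : T, exists2 n, delta e V1 x y = Some n & n <= 2)
  (S : {set T}) (S_ne : S != set0) (S_proper : S != setT)
  (V2_sub : V2 V1 \subset S)
  (k : nat) (k_attained : exists2 x, x \in V1 & deg e x = k)
  (k_min : forall x, x \in V1 -> k <= deg e x)
  (k_gt : #|edges_between e S (~: S)| < k) :
  [/\ exists2 sb, sb \in ~: S & delta_set e V1 sb S = Some 2,
      forall s, s \in S -> delta_set e V1 s (~: S) = Some 1,
      [/\ #|S :&: V1| < #|edges_between e S (~: S)|,
          #|edges_between e S (~: S)| < k & k < #|~: S| ],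
      S :&: V1 \subset boundary e V1 2 /\ interior e V1 2 \subset ~: S
    & Phi e V1 <= #|edges_between e S (~: S)| ].
Proof.
have [sb sb_out sb_far] := exists_far_from_S e_sym e_irr S_proper V2_sub k_min k_gt.
split.
- by exists sb; last exact: (delta_set_far diam S_ne V2_sub sb_out sb_far).
- exact: (delta_set_S e_sym e_irr V2_ne diam V2_sub sb_out sb_far).
- split=> //; first exact: (card_S_V1_lt_cut e_sym V2_ne diam V2_sub sb_out sb_far).
  exact: (k_lt_coS e_irr V2_sub k_min sb_out sb_far).
- split; first exact: (S_V1_boundary e_sym e_irr V2_ne diam V2_sub k_min k_gt sb_out sb_far).
  exact: (interior_coS e_sym e_irr V2_ne diam V2_sub k_min k_gt sb_out sb_far).
- exact: (Phi_le_cut e_sym e_irr V2_ne diam V2_sub k_min k_gt sb_out sb_far).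
Qed.
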